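(* Let $(X,b,m)$ be a connected weighted graph satisfying conditions (B) and (M), let $V:X\to\mathbb{R}$ be bounded, and let $\lambda_V:=\inf\sigma(L_V)$. Let $D\subset X$ be relatively dense with covering radius $R$, and $\Omega:=X\setminus D$. If there exists a regular ground state of $L_V$ with bound $c$, then for all $f\in\ell^2(X,m)$ with $f=0$ on $D$, $$\mathcal{E}_V(f,f)\ge\left(\lambda_V+\frac{1}{c^4\cdot R\cdot\mathrm{vol}[c^2R]}\right)\|f\|^2 .$$
   Context: A weighted graph $(X,b,m)$: $X$ countable, $b:X\times X\to[0,\infty)$ symmetric with $b(x,x)=0$ and $\sum_y b(x,y)<\infty$, $m:X\to(0,\infty)$; $\mathrm{vol}(A):=\sum_{x\in A}m(x)$. Condition (B): $\sup_x\frac{1}{m(x)}\sum_y b(x,y)<\infty$. Condition (M): $\sup_x m(x)<\infty$. On $\ell^2(X,m)$ (norm $\|f\|^2=\sum_x|f(x)|^2m(x)$), $\mathcal{E}(f,g)=\frac12\sum_{x,y}b(x,y)(f(x)-f(y))(\overline{g(x)}-\overline{g(y)})$ and $\mathcal{E}_V(f,g):=\mathcal{E}(f,g)+\sum_x V(x)f(x)\overline{g(x)}$; $L_V$ is the associated bounded selfadjoint operator $(L_Vf)(x)=\frac{1}{m(x)}\left(\sum_y b(x,y)(f(x)-f(y))+V(x)f(x)\right)$. A ground state of $L_V$ is a function $\phi:X\to(0,\infty)$ with $\sum_y b(x,y)\phi(y)<\infty$ for all $x$ and $\frac{1}{m(x)}\left(\sum_y b(x,y)(\phi(x)-\phi(y))+V(x)\phi(x)\right)-\lambda_V\phi(x)\ge0$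 for all $x\in X$; it is regular with bound $c\ge1$ if $1/c\le\phi(x)\le c$ for all $x$. A path is $\gamma=(x_0,\dots,x_k)$ with $b(x_j,x_{j+1})>0$, of length $\sum_{j=0}^{k-1}1/b(x_j,x_{j+1})$; connected means any two points are joined by a path; $d(x,y)$ is the infimum of path lengths; $B_r(x):=\{y:d(x,y)\le r\}$; $\mathrm{vol}[s]:=\sup_{x}\mathrm{vol}(B_s(x))$. The covering radius of $D$ is $\inf\{R>0:\bigcup_{p\in D}B_R(p)=X\}$, and $D$ is relatively dense if it is finite. *)

From mathcomp Require Import all_boot all_order all_algebra.
From mathcomp Require Import all_classical all_reals all_analysis.
Set Implicit Arguments. Unset Strict Implicit. Unset Printing Implicit Defensive.
Import Order.TTheory GRing.Theory Num.Theory.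
Local Open Scope classical_set_scope.
Local Open Scope ring_scope.

Section WG.
Variables (R : realType) (X : choiceType).

Definition esumX (a : X -> R) : \bar R := (\esum_(x in [set: X]) (a x)%:E)%E.

Definition sumR (a : X -> R) : R :=
  fine (esumX (fun x => Num.max (a x) 0)) - fine (esumX (fun x => Num.max (- a x) 0)).

Variables (b : X -> X -> R) (m : X -> R).

Definition weighted_graph : Prop :=
  countable [set: X] /\
  (forall x y, 0 <= b x y) /\ (forall x y, b x y = b y x) /\ (forall x, b x x = 0) /\
  (forall x, (esumX (b x) < +oo)%E) /\ (forall x, 0 < m x).

Definition condB : Prop := exists C : R, forall x, (m x)^-1 * fine (esumX (b x)) <= C.
Definition condM : Prop := exists M : R, forall x, m x <= M.

Fixpoint is_path (x : X) (s : seq X) : Prop :=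
  match s with [::] => True | y :: s' => 0 < b x y /\ is_path y s' end.
Fixpoint path_length (x : X) (s : seq X) : R :=
  match s with [::] => 0 | y :: s' => (b x y)^-1 + path_length y s' end.
Definition path_from_to (x y : X) (s : seq X) : Prop := is_path x s /\ last x s = y.

Definition connected_graph : Prop := forall x y, exists s, path_from_to x y s.

Definition dist (x y : X) : R := inf [set path_length x s | s in path_from_to x y].
Definition ball (x : X) (r : R) : set X := [set y | dist x y <= r].

Definition vol (A : set X) : \bar R := (\esum_(x in A) (m x)%:E)%E.
Definition volsup (s : R) : \bar R := ereal_sup [set vol (ball x s) | x in [set: X]].

Definition covering_set (D : set X) : set R :=
  [set r | 0 < r /\ forall x, exists p, D p /\ ball p r x].
Definition covering_radius (D : set X) : R := inf (covering_set D).
Definition relatively_dense (D : set X) : Prop := covering_set D !=set0.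

Definition l2 (f : X -> R) : Prop := (esumX (fun x => (f x ^+ 2 * m x)%R) < +oo)%E.
Definition norm2 (f : X -> R) : R := fine (esumX (fun x => f x ^+ 2 * m x)).

Definition energy (f : X -> R) : R :=
  2^-1 * fine (\esum_(p in [set: X * X]) ((b p.1 p.2 * (f p.1 - f p.2) ^+ 2)%R)%:E)%E.
Definition energyV (V : X -> R) (f : X -> R) : R :=
  energy f + sumR (fun x => V x * f x ^+ 2).

Definition LV (V : X -> R) (f : X -> R) (x : X) : R :=
  (m x)^-1 * (sumR (fun y => b x y * (f x - f y)) + V x * f x).

Definition resolvent_point (V : X -> R) (lam : R) : Prop :=
  forall g, l2 g -> exists! f, l2 f /\ (fun x => LV V f x - lam * f x) = g.
Definition spectrum (V : X -> R) : set R := [set lam | ~ resolvent_point V lam].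
Definition bottom_spectrum (V : X -> R) : R := inf (spectrum V).

Definition ground_state (V : X -> R) (phi : X -> R) : Prop :=
  (forall x, 0 < phi x) /\
  (forall x, (esumX (fun y => (b x y * phi y)%R) < +oo)%E) /\
  (forall x, 0 <= LV V phi x - bottom_spectrum V * phi x).
Definition regular_ground_state (V : X -> R) (phi : X -> R) (c : R) : Prop :=
  ground_state V phi /\ 1 <= c /\ (forall x, c^-1 <= phi x /\ phi x <= c).

End WG.

(* Write f = phi g with the ground state phi.  Expanding b (f x - f y)^2 in terms of g and
   using L_V phi >= lam phi gives E_V(f) >= lam ||f||^2 + 1/2 sum b phi(x) phi(y) (g x - g y)^2,
   and phi(x) phi(y) >= c^-2.  Since f vanishes on D, each x is joined to D by a simple path
   of length at most R, and Cauchy-Schwarz along it bounds g(x)^2 by R times the energy of g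
   on the path.  An edge lies, in at most one direction, only on the paths of points within
   distance R of it, so summing against m gives ||g||^2 <= R vol[R] / 2 sum b (g x - g y)^2.
   Finally ||f||^2 <= c^2 ||g||^2 and vol[R] <= vol[c^2 R]. *)

From mathcomp Require Import all_boot all_order all_algebra.
From mathcomp Require Import all_classical all_reals all_analysis.
From mathcomp Require Import ring lra.
From mathcomp Require finmap.
Set Implicit Arguments. Unset Strict Implicit. Unset Printing Implicit Defensive.
Import Order.TTheory GRing.Theory Num.Theory.
Local Open Scope classical_set_scope.
Local Open Scope ring_scope.

Lemma perm_filter_mem (T : eqType) (s t : seq T) : uniq s -> uniq t -> {subset s <= t} ->
  perm_eq s [seq x <- t | x \in s].
Proof.
move=> us ut st; apply: uniq_perm; rewrite ?filter_uniq // => x.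
by rewrite mem_filter; case: (boolP (x \in s)) => // /st ->.
Qed.

Lemma sum_indicator (R : pzSemiRingType) (T : eqType) (F : T -> R) (s t : seq T) :
  uniq s -> uniq t -> {subset s <= t} ->
  \sum_(e <- s) F e = \sum_(e <- t) (e \in s)%:R * F e.
Proof.
move=> us ut st; rewrite (perm_big _ (perm_filter_mem us ut st)) big_filter big_mkcond.
by apply: eq_bigr => e _; case: (e \in s); rewrite ?mul1r ?mul0r.
Qed.

Section NonnegativeSums.
Variables (R : realType) (T : choiceType).
Implicit Types (a w : T -> R) (s t : seq T).

(* [fine] sends [+oo] to [0]: [psum a] is the sum of [a] only when [a] is [psummable]. *)
Definition psum a : R := fine (\esum_(x in [set: T]) (a x)%:E)%E.
Definition nonneg a := forall x, 0 <= a x.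
Definition psummable a := nonneg a /\ (\esum_(x in [set: T]) (a x)%:E < +oo)%E.

Lemma ler_sum_subseq a s t : nonneg a -> uniq s -> uniq t -> {subset s <= t} ->
  \sum_(x <- s) a x <= \sum_(x <- t) a x.
Proof.
move=> a0 us ut st; rewrite [leRHS](bigID (fun x => x \in s)) /= -[X in _ <= X + _]big_filter.
by rewrite -(perm_big _ (perm_filter_mem us ut st)) lerDl sumr_ge0.
Qed.

Lemma ler_sum_undupl a s t : nonneg a -> uniq s ->
  \sum_(x <- s) a x <= \sum_(x <- undup (s ++ t)) a x.
Proof.
move=> a0 us; apply: ler_sum_subseq => //; first exact: undup_uniq.
by move=> x xs; rewrite mem_undup mem_cat xs.
Qed.

Lemma ler_sum_undupr a s t : nonneg a -> uniq t ->
  \sum_(x <- t) a x <= \sum_(x <- undup (s ++ t)) a x.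
Proof.
move=> a0 ut; apply: ler_sum_subseq => //; first exact: undup_uniq.
by move=> x xt; rewrite mem_undup mem_cat xt orbT.
Qed.

Lemma psummableE a : psummable a -> \esum_(x in [set: T]) (a x)%:E = (psum a)%:E.
Proof.
move=> [a0 afin]; rewrite /psum fineK // ge0_fin_numE //.
by apply: esum_ge0 => x _; rewrite lee_fin.
Qed.

Lemma psum_ge0 a : nonneg a -> 0 <= psum a.
Proof. by move=> a0; apply/fine_ge0/esum_ge0 => x _; rewrite lee_fin. Qed.

Lemma ler_sum_psum a s : psummable a -> uniq s -> \sum_(x <- s) a x <= psum a.
Proof.
move=> sa us; rewrite -lee_fin -psummableE //; apply: esum_ge.
exists [set` s]; first by split.
by rewrite fsumEFin; [rewrite -fsbig_seq|case: sa].
Qed.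

Lemma psum_le_bound a (B : R) : nonneg a ->
  (forall s, uniq s -> \sum_(x <- s) a x <= B) -> psummable a /\ psum a <= B.
Proof.
move=> a0 aB.
have esumB : (\esum_(x in [set: T]) (a x)%:E <= B%:E)%E.
  apply: ge_ereal_sup => _ [A [finA _] <-].
  by rewrite fsumEFin // fsbig_finite // lee_fin; apply/aB/finmap.fset_uniq.
have sa : psummable a by split => //; apply: le_lt_trans esumB (ltry _).
by split => //; rewrite -lee_fin -psummableE.
Qed.

Lemma psum_approx a e : psummable a -> 0 < e ->
  exists s, uniq s /\ psum a - e < \sum_(x <- s) a x.
Proof.
move=> sa e0; apply/not_existsP => nos.
have [_] : psummable a /\ psum a <= psum a - e.
  apply: psum_le_bound; first by case: sa.
  by move=> s us; have /not_andP[//|/negP] := nos s; rewrite -leNgt.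
lra.
Qed.

Lemma psum_approx_subseq a e : psummable a -> 0 < e -> exists s, uniq s /\
  forall t, uniq t -> {subset s <= t} -> psum a - e < \sum_(x <- t) a x.
Proof.
move=> sa e0; have [s [us hs]] := psum_approx sa e0; exists s; split => // t ut st.
exact: lt_le_trans hs (ler_sum_subseq sa.1 us ut st).
Qed.

Lemma psumD a w : psummable a -> psummable w ->
  psummable (a \+ w) /\ psum (a \+ w) = psum a + psum w.
Proof.
move=> sa sw; have a0 := sa.1; have w0 := sw.1.
have aw0 : nonneg (a \+ w) by move=> x; apply: addr_ge0.
have [saw le_aw] : psummable (a \+ w) /\ psum (a \+ w) <= psum a + psum w.
  by apply: psum_le_bound => // s us; rewrite big_split; apply: lerD; apply: ler_sum_psum.
split => //; apply/eqP; rewrite eq_le le_aw /=; apply/ler_addgt0Pr => e e0.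
have e2 : 0 < e / 2 by rewrite divr_gt0.
have [s [us hs]] := psum_approx sa e2.
have [t [ut ht]] := psum_approx sw e2.
have := ler_sum_psum saw (undup_uniq (s ++ t)); rewrite big_split /=.
have := ler_sum_undupl t a0 us; have := ler_sum_undupr s w0 ut; lra.
Qed.

Lemma psum_tail_le a w s : nonneg a -> psummable w -> (forall x, a x <= w x) -> uniq s ->
  psummable a /\ psum a - \sum_(x <- s) a x <= psum w - \sum_(x <- s) w x.
Proof.
move=> a0 sw aw us.
have dominated b : nonneg b -> (forall x, b x <= w x) -> psummable b.
  move=> b0 bw; apply: (proj1 (psum_le_bound (B := psum w) b0 _)) => t ut.
  by apply: le_trans (ler_sum_psum sw ut); apply: ler_sum.
have sa := dominated _ a0 aw.
have sr : psummable (w \- a).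
  by apply: dominated => x; rewrite /= ?subr_ge0 // gerBl.
have [_] := psumD sa sr.
have -> : a \+ (w \- a) = w by apply/funext => x /=; ring.
move=> ew; split => //; rewrite ew.
have := ler_sum_psum sr us; rewrite sumrB; lra.
Qed.

Lemma psum_le a w : nonneg a -> psummable w -> (forall x, a x <= w x) ->
  psummable a /\ psum a <= psum w.
Proof.
move=> a0 sw aw; have [sa] := psum_tail_le a0 sw aw (s := [::]) isT.
by rewrite !big_nil !subr0.
Qed.

Lemma psumZ a k : psummable a -> 0 <= k ->
  psummable (fun x => k * a x) /\ psum (fun x => k * a x) = k * psum a.
Proof.
move=> sa k0; have a0 := sa.1.
have ka0 : nonneg (fun x => k * a x) by move=> x; apply: mulr_ge0.
have [ska le_ka] : psummable (fun x => k * a x) /\ psum (fun x => k * a x) <= k * psum a.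
  by apply: psum_le_bound => // s us; rewrite -mulr_sumr ler_wpM2l // ler_sum_psum.
split => //; apply/eqP; rewrite eq_le le_ka /=.
have [->|kn0] := eqVneq k 0; first by rewrite mul0r psum_ge0 // => x; rewrite mul0r.
have kgt0 : 0 < k by rewrite lt_def kn0.
apply/ler_addgt0Pr => e e0.
have [s [us hs]] := psum_approx sa (divr_gt0 e0 kgt0).
have := ler_sum_psum ska us; rewrite -mulr_sumr.
have : k * (psum a - e / k) <= k * \sum_(x <- s) a x by rewrite ler_wpM2l // ltW.
rewrite mulrBr mulrCA divff ?mulr1 //; lra.
Qed.

Lemma psum_involutive a (h : T -> T) : psummable a -> involutive h ->
  psummable (a \o h) /\ psum (a \o h) = psum a.
Proof.
move=> sa hK; have a0 := sa.1.
have ah0 : nonneg (a \o h) by move=> x; apply: a0.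
have sum_comp_le b : psummable b -> forall s, uniq s -> \sum_(x <- s) b (h x) <= psum b.
  move=> sb s us; rewrite -(big_map h xpredT b); apply: ler_sum_psum => //.
  by rewrite map_inj_uniq //; apply: inv_inj.
have [sah le_ah] := psum_le_bound ah0 (sum_comp_le a sa).
split => //; apply/eqP; rewrite eq_le le_ah /=.
suff [] : psummable a /\ psum a <= psum (a \o h) by [].
apply: psum_le_bound => // s us.
by have := sum_comp_le _ sah s us; under eq_bigr do rewrite /= hK.
Qed.

Definition pos_part a := fun x => Num.max (a x) 0.
Definition neg_part a := fun x => Num.max (- a x) 0.

Lemma pos_partD_neg_part a x : pos_part a x + neg_part a x = `|a x|.
Proof.
rewrite /pos_part /neg_part; move: (a x) => r; rewrite !maxEle.
by case: (lerP 0 r) => h; [rewrite ger0_norm // | rewrite ltr0_norm //];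
  case: ifPn => h1; case: ifPn => h2; lra.
Qed.

Lemma pos_partB_neg_part a x : pos_part a x - neg_part a x = a x.
Proof.
rewrite /pos_part /neg_part; move: (a x) => r; rewrite !maxEle.
by case: ifPn => h1; case: ifPn => h2; lra.
Qed.

Lemma sumR_approx a w s : psummable w -> (forall x, `|a x| <= w x) -> uniq s ->
  `|sumR a - \sum_(x <- s) a x| <= psum w - \sum_(x <- s) w x.
Proof.
move=> sw aw us.
have p0 : nonneg (pos_part a) by move=> x; rewrite /pos_part le_max lexx orbT.
have n0 : nonneg (neg_part a) by move=> x; rewrite /neg_part le_max lexx orbT.
have pn0 : nonneg (pos_part a \+ neg_part a) by move=> x; apply: addr_ge0.
have pnw x : (pos_part a \+ neg_part a) x <= w x by rewrite /= pos_partD_neg_part.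
have [spn tl] := psum_tail_le pn0 sw pnw us.
have [sp _] : psummable (pos_part a) /\ psum (pos_part a) <= psum (pos_part a \+ neg_part a).
  by apply: psum_le => // x /=; rewrite lerDl.
have [sn _] : psummable (neg_part a) /\ psum (neg_part a) <= psum (pos_part a \+ neg_part a).
  by apply: psum_le => // x /=; rewrite lerDr.
have -> : sumR a = psum (pos_part a) - psum (neg_part a) by [].
have -> : \sum_(x <- s) a x = \sum_(x <- s) pos_part a x - \sum_(x <- s) neg_part a x.
  by rewrite -sumrB; apply: eq_bigr => x _; rewrite pos_partB_neg_part.
apply: le_trans tl; move: (psumD sp sn).2; rewrite big_split /= => ->.
have := ler_sum_psum sp us; have := ler_sum_psum sn us.
rewrite ler_norml; lra.
Qed.

End NonnegativeSums.

Section PairSums.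
Variables (R : realType) (T1 T2 : choiceType).
Implicit Types (F : T1 * T2 -> R).

Lemma uniq_pairs (s1 : seq T1) (s2 : seq T2) :
  uniq s1 -> uniq s2 -> uniq [seq (x, y) | x <- s1, y <- s2].
Proof. by move=> u1 u2; apply: allpairs_uniq => // -[? ?] [? ?]. Qed.

Lemma ler_sum_pairs F (s : seq (T1 * T2)) (s1 : seq T1) (s2 : seq T2) :
  nonneg F -> uniq s -> uniq s1 -> uniq s2 ->
  (forall p, p \in s -> (p.1 \in s1) && (p.2 \in s2)) ->
  \sum_(p <- s) F p <= \sum_(x <- s1) \sum_(y <- s2) F (x, y).
Proof.
move=> F0 us u1 u2 s12; rewrite -big_allpairs; apply: ler_sum_subseq => //.
  exact: uniq_pairs.
by move=> [x y] /s12 /andP [hx hy]; apply: allpairs_f.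
Qed.

Lemma ler_sum_pairs_psum F (s1 : seq T1) (s2 : seq T2) :
  psummable F -> uniq s1 -> uniq s2 -> \sum_(x <- s1) \sum_(y <- s2) F (x, y) <= psum F.
Proof. by move=> sF u1 u2; rewrite -big_allpairs; apply/ler_sum_psum/uniq_pairs. Qed.

Lemma psum_row F x : psummable F ->
  psummable (fun y => F (x, y)) /\ psum (fun y => F (x, y)) <= psum F.
Proof.
move=> sF; apply: psum_le_bound => [y|s2 u2]; first exact: sF.1.
by have := ler_sum_pairs_psum sF (isT : uniq [:: x]) u2; rewrite big_seq1.
Qed.

Lemma ler_sum_psum_rows F (s1 : seq T1) : psummable F -> uniq s1 ->
  \sum_(x <- s1) psum (fun y => F (x, y)) <= psum F.
Proof.
move=> sF u1; rewrite -lee_fin -psummableE //.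
have -> : \esum_(k in [set: T1 * T2]) (F k)%:E =
          \esum_(k in [set: T1] `*`` (fun=> [set: T2])) (F (k.1, k.2))%:E.
  have -> : [set: T1 * T2] = [set: T1] `*`` (fun=> [set: T2]) by apply/seteqP; split.
  by apply: eq_esum => -[].
rewrite -(esum_esum (a := fun x y => (F (x, y))%:E)); last first.
  by move=> x y _ _; rewrite lee_fin; apply: sF.1.
rewrite -sumEFin; under eq_bigr => x _ do rewrite -(psummableE (psum_row x sF).1).
by apply: esum_ge; exists [set` s1]; [split|rewrite -fsbig_seq].
Qed.

End PairSums.

Lemma psum_pairs_approx (R : realType) (T : choiceType) (F : T * T -> R) e :
  psummable F -> 0 < e -> exists s, uniq s /\ forall t, uniq t -> {subset s <= t} ->
    psum F - e < \sum_(x <- t) \sum_(y <- t) F (x, y).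
Proof.
move=> sF e0; have [sp [usp hsp]] := psum_approx sF e0.
exists (undup (map fst sp ++ map snd sp)); split => [|t ut st]; first exact: undup_uniq.
apply: lt_le_trans hsp (ler_sum_pairs sF.1 usp ut ut _) => p psp.
by rewrite !st // mem_undup mem_cat ?(map_f fst psp) ?(map_f snd psp) ?orbT.
Qed.

Lemma sqrD_le_weighted (R : realFieldType) (w L Q a A : R) :
  0 < w -> 0 <= L -> 0 <= Q -> A ^+ 2 <= L * Q ->
  (a + A) ^+ 2 <= (w^-1 + L) * (w * a ^+ 2 + Q).
Proof.
move=> w0 L0 Q0 AQ.
have cross : 2 * (w * a) * A <= Q + L * (w * a) ^+ 2.
  have [L00|Lgt0] := eqVneq L 0.
    have A0 : A = 0 by apply/eqP; rewrite -sqrf_eq0 eq_le sqr_ge0 andbT -(mul0r Q) -L00.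
    by rewrite A0 L00 mulr0 mul0r addr0.
  have Lpos : 0 < L by rewrite lt_def Lgt0.
  rewrite -subr_ge0 -(pmulr_rge0 _ Lpos).
  have -> : L * (Q + L * (w * a) ^+ 2 - 2 * (w * a) * A) =
            (L * (w * a) - A) ^+ 2 + (L * Q - A ^+ 2) by ring.
  by rewrite addr_ge0 ?sqr_ge0 ?subr_ge0.
have wn0 : w != 0 by rewrite gt_eqF.
have cross' : 2 * a * A <= w^-1 * Q + L * (w * a ^+ 2).
  have wV0 : 0 <= w^-1 by rewrite invr_ge0 ltW.
  have := ler_wpM2l wV0 cross.
  by congr (_ <= _); field.
by rewrite mulrDl !mulrDr mulrA mulVf // mul1r sqrrD; lra.
Qed.

Definition edge_energy (R : realType) (X : choiceType) (b : X -> X -> R) (g : X -> R)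
  (p : X * X) : R := b p.1 p.2 * (g p.1 - g p.2) ^+ 2.

Lemma edge_energy_ge0 (R : realType) (X : choiceType) (b : X -> X -> R) :
  (forall x y, 0 <= b x y) -> forall g, nonneg (edge_energy b g).
Proof. by move=> b_ge0 g p; rewrite mulr_ge0 ?sqr_ge0. Qed.

Section Paths.
Variables (R : realType) (X : choiceType) (b : X -> X -> R).
Hypothesis b_ge0 : forall x y, 0 <= b x y.
Hypothesis bC : forall x y, b x y = b y x.

Fixpoint path_edges (x : X) (s : seq X) : seq (X * X) :=
  if s is y :: s' then (x, y) :: path_edges y s' else [::].

Lemma is_path_cat x s1 s2 :
  is_path b x (s1 ++ s2) <-> is_path b x s1 /\ is_path b (last x s1) s2.
Proof. by elim: s1 x => [|y s1 IH] x /=; [tauto|rewrite IH; tauto]. Qed.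

Lemma path_length_cat x s1 s2 :
  path_length b x (s1 ++ s2) = path_length b x s1 + path_length b (last x s1) s2.
Proof. by elim: s1 x => [|y s1 IH] x /=; rewrite ?add0r // IH addrA. Qed.

Lemma path_length_ge0 x s : 0 <= path_length b x s.
Proof. by elim: s x => [|y s IH] x //=; rewrite addr_ge0 ?invr_ge0. Qed.

Lemma is_path_rcons x s y : is_path b x (rcons s y) <-> is_path b x s /\ 0 < b (last x s) y.
Proof. by rewrite -cats1 is_path_cat /=; split => [[? [? _]]|[? ?]]. Qed.

Lemma path_length_rcons x s y :
  path_length b x (rcons s y) = path_length b x s + (b (last x s) y)^-1.
Proof. by rewrite -cats1 path_length_cat /= addr0. Qed.

Lemma is_path_rev x s : is_path b x s ->
  [/\ is_path b (last x s) (rev (belast x s)), last (last x s) (rev (belast x s)) = x &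
      path_length b (last x s) (rev (belast x s)) = path_length b x s].
Proof.
elim: s x => [|y s IH] x //= [bxy py]; have [p1 l1 e1] := IH y py.
rewrite rev_cons last_rcons path_length_rcons l1 e1 (bC y x) addrC.
by split => //; apply/is_path_rcons; rewrite l1 bC.
Qed.

Lemma dist_sym x y : dist b x y = dist b y x.
Proof.
suff sub u v : [set path_length b u s | s in path_from_to b u v] `<=`
               [set path_length b v s | s in path_from_to b v u].
  by rewrite /dist; congr inf; apply/seteqP; split; apply: sub.
move=> _ [s [ps <-] <-]; have [p1 l1 e1] := is_path_rev ps.
by exists (rev (belast u s)).
Qed.

Lemma dist_le_path_length x y s : path_from_to b x y s -> dist b x y <= path_length b x s.
Proof.
move=> pxy; apply: ge_inf; last by exists s.
by exists 0 => _ [t _ <-]; apply: path_length_ge0.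
Qed.

Lemma path_prefix x s v : is_path b x s -> v \in x :: s ->
  exists2 p, path_from_to b x v p & path_length b x p <= path_length b x s.
Proof.
elim: s x => [|y s IH] x /=.
  by move=> _; rewrite inE => /eqP ->; exists [::].
case=> bxy py; rewrite inE => /orP [/eqP ->|vin].
  by exists [::] => //=; rewrite addr_ge0 ?invr_ge0 ?path_length_ge0.
have [p [pp lp] le] := IH y py vin.
by exists (y :: p) => //=; rewrite lerD2l.
Qed.

Lemma path_shortcut x s : is_path b x s -> ~~ uniq (x :: s) ->
  exists s', [/\ is_path b x s', last x s' = last x s &
                 path_length b x s' < path_length b x s].
Proof.
elim: s x => [//|y s IH] x pxs; have [bxy py] := pxs.
rewrite [uniq _]/= negb_and negbK => /orP [xin|nu].
- move: pxs; case/splitPr: xin => s1 s2 pxs.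
  have [ps1 [bx ps2]] := (is_path_cat x s1 (x :: s2)).1 pxs.
  exists s2; split => //; first by rewrite last_cat.
  by rewrite path_length_cat /= addrA ltrDr ltr_wpDl ?path_length_ge0 ?invr_gt0.
- have [s' [ps' l' len']] := IH y py nu.
  by exists (y :: s'); split => //=; rewrite ltrD2l.
Qed.

Lemma path_edge_gt0 x s e : is_path b x s -> e \in path_edges x s -> 0 < b e.1 e.2.
Proof.
elim: s x => [|y s IH] x //= [bxy py]; rewrite inE => /orP [/eqP -> //|].
exact: IH.
Qed.

Lemma path_edges_mem x s e : e \in path_edges x s -> e.1 \in x :: s /\ e.2 \in s.
Proof.
elim: s x => [|y s IH] x //=; rewrite inE => /orP [/eqP -> /=|/IH [h1 h2]].
  by rewrite !inE !eqxx ?orbT.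
by rewrite inE h1 inE h2 !orbT.
Qed.

Lemma uniq_path_edges x s : uniq (x :: s) -> uniq (path_edges x s).
Proof.
elim: s x => [|y s IH] x //= /andP [xn /andP [yn us]].
rewrite IH ?andbT /=; last by rewrite yn.
by apply/negP => /path_edges_mem [/= h _]; rewrite h in xn.
Qed.

Lemma path_edges_swap_notin x s e : uniq (x :: s) ->
  e \in path_edges x s -> swap_pair e \notin path_edges x s.
Proof.
case: e => u v; elim: s x => [|y s IH] x //= /andP [xn /andP [yn us]]; rewrite !inE.
move=> /orP [/eqP [-> ->]|h1]; apply/negP => /orP [/eqP [e1 e2]|h2].
- by move: xn; rewrite e1 inE eqxx.
- by have [_ /= h] := path_edges_mem h2; move: xn; rewrite inE h orbT.
- by have [_ /= h] := path_edges_mem h1; move: xn; rewrite -e1 inE h orbT.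
- by move: h2; apply/negP; apply: (IH y); rewrite //= yn.
Qed.

Lemma path_cauchy_schwarz (g : X -> R) x s : is_path b x s ->
  (g x - g (last x s)) ^+ 2 <=
  path_length b x s * \sum_(e <- path_edges x s) edge_energy b g e.
Proof.
elim: s x => [|y s IH] x /=; first by rewrite subrr expr0n mul0r.
case=> bxy py; rewrite big_cons /=.
have -> : g x - g (last y s) = (g x - g y) + (g y - g (last y s)) by ring.
apply: sqrD_le_weighted => //; [exact: path_length_ge0| |exact: IH].
by apply: sumr_ge0 => e _; apply: edge_energy_ge0.
Qed.

End Paths.

Lemma finite_large_terms (R : realType) (T : choiceType) (a : T -> R) (eps : R) :
  psummable a -> 0 < eps -> finite_set [set y | eps <= a y].
Proof.
move=> sa eps0; pose n := (Num.bound (psum a / eps)).+1.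
apply: contrapT => /(infinite_set_fset n) [B BA nB].
have sum_le : eps *+ n <= psum a.
  apply: le_trans (ler_sum_psum sa (finmap.fset_uniq B)).
  apply: le_trans (_ : eps *+ size (finmap.enum_fset B) <= _).
    exact: (ler_wpMn2l (ltW eps0) nB).
  rewrite -iter_addr_0 -count_predT -big_const_seq big_seq_cond [leRHS]big_seq_cond.
  by apply: ler_sum => y /andP [/BA].
have : psum a / eps < n%:R.
  apply: lt_le_trans (archi_boundP _) _; first by rewrite divr_ge0 ?psum_ge0 ?ltW //; case: sa.
  by rewrite ler_nat.
rewrite ltr_pdivrMr // -mulr_natl in sum_le *; lra.
Qed.

Fixpoint paths_in (X : eqType) (nb : X -> seq X) (k : nat) (x : X) : seq (seq X) :=
  if k is k'.+1 then [::] :: flatten [seq map (cons y) (paths_in nb k' y) | y <- nb x]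
  else [:: [::]].

Lemma mem_paths_in (X : choiceType) (nb : X -> seq X) k x s : (size s <= k)%N ->
  (forall e, e \in path_edges x s -> e.2 \in nb e.1) -> s \in paths_in nb k x.
Proof.
elim: k x s => [|k IH] x [|y s] //=; rewrite ?inE ?eqxx // ltnS => sz es.
apply/orP; right; apply/flatten_mapP; exists y.
  by apply: (es (x, y)); rewrite inE eqxx.
by apply/map_f/IH => // e ein; apply: es; rewrite inE ein orbT.
Qed.

Lemma exists_min_in_seq (T : eqType) (R : realDomainType) (l : seq T) (P : T -> Prop)
    (F : T -> R) : (exists2 s, s \in l & P s) ->
  exists s, [/\ s \in l, P s & forall t, t \in l -> P t -> F s <= F t].
Proof.
elim: l => [[s]//|a l IH] [s sin Ps].
have [Pa|nPa] := pselect (P a); last first.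
  have [t tin Pt] : exists2 t, t \in l & P t.
    by move: sin; rewrite inE => /orP [/eqP e|]; [move: Ps; rewrite e|exists s].
  have [u [uin Pu umin]] := IH (ex_intro2 _ _ t tin Pt).
  exists u; split => //; first by rewrite inE uin orbT.
  by move=> v; rewrite inE => /orP [/eqP ->//|/umin].
have [ex|nex] := pselect (exists2 t, t \in l & P t); last first.
  exists a; split => //; first by rewrite inE eqxx.
  by move=> v; rewrite inE => /orP [/eqP ->//|vin Pv]; case: nex; exists v.
have [u [uin Pu umin]] := IH ex.
have [Fau|Fua] := lerP (F a) (F u).
  exists a; split => //; first by rewrite inE eqxx.
  by move=> v; rewrite inE => /orP [/eqP ->//|vin Pv]; apply: le_trans Fau (umin v vin Pv).
exists u; split => //; first by rewrite inE uin orbT.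
by move=> v; rewrite inE => /orP [/eqP -> _|]; [apply: ltW|apply: umin].
Qed.

Section ShortestPaths.
Variables (R : realType) (X : choiceType) (b : X -> X -> R) (B : R).
Hypothesis b_ge0 : forall x y, 0 <= b x y.
Hypothesis b_psummable : forall x, psummable (b x).
Hypothesis B_gt0 : 0 < B.
Hypothesis b_le : forall x y, b x y <= B.

Lemma edge_inv_le_path_length x s e : is_path b x s -> e \in path_edges x s ->
  (b e.1 e.2)^-1 <= path_length b x s.
Proof.
elim: s x => [|y s IH] x //= [bxy py]; rewrite inE => /orP [/eqP -> /=|ein].
  by rewrite lerDl path_length_ge0.
by apply: le_trans (IH y py ein) _; rewrite lerDr invr_ge0 ltW.
Qed.

Lemma size_le_path_length x s : is_path b x s -> (size s)%:R <= B * path_length b x s.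
Proof.
elim: s x => [|y s IH] x /=; first by rewrite mulr0.
case=> bxy py; rewrite -addn1 natrD mulrDr addrC.
apply: lerD; last exact: IH.
by rewrite -ler_pdivrMl // mulr1 lef_pV2 ?posrE.
Qed.

(* A path of length at most [L] has at most [B * L] steps, each along one of the finitely
   many edges of weight at least [1 / L] at its tail. *)
Lemma finite_short_paths x L : 0 < L ->
  exists ps : seq (seq X), forall s, is_path b x s -> path_length b x s <= L -> s \in ps.
Proof.
move=> L0.
have heavy y : exists l : seq X, forall z, z \in l <-> L^-1 <= b y z.
  have /finite_seqP [l el] : finite_set [set z | L^-1 <= b y z].
    by apply: finite_large_terms; rewrite ?invr_gt0.
  by exists l => z; rewrite -[in X in X <-> _]/([set` l] z) -el.
have [nb nbP] := choice heavy.
exists (paths_in nb (Num.bound (B * L)) x) => s ps sL; apply: mem_paths_in.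
  have : (size s)%:R < (Num.bound (B * L))%:R :> R.
    apply: le_lt_trans (size_le_path_length ps) _.
    apply: (le_lt_trans _ (archi_boundP _)); first by rewrite ler_pM2l.
    by rewrite mulr_ge0 ?ltW.
  by rewrite ltr_nat => /ltnW.
move=> e ein; apply/nbP; have be := path_edge_gt0 ps ein.
by rewrite -(invrK (b e.1 e.2)) lef_pV2 ?posrE ?invr_gt0 //;
  apply: le_trans (edge_inv_le_path_length ps ein) sL.
Qed.

(* Finitely many paths are shorter than [r + 1], so the infimum [r] is attained; a minimal
   path is simple since cutting out a loop shortens it. *)
Lemma simple_path_to (D : set X) (r : R) x : 0 <= r ->
  (forall d, 0 < d -> exists s, [/\ is_path b x s, D (last x s) & path_length b x s <= r + d]) ->
  exists s, [/\ is_path b x s, D (last x s), uniq (x :: s) & path_length b x s <= r].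
Proof.
move=> r0 near_paths.
have [ps psP] := finite_short_paths x (ltr_wpDl r0 ltr01 : 0 < r + 1).
pose P s := is_path b x s /\ D (last x s).
have [s1 [p1 D1 l1]] := near_paths 1 ltr01.
have [s [sin [p Ds] smin]] := exists_min_in_seq (path_length b x)
  (ex_intro2 (fun s => s \in ps) P s1 (psP s1 p1 l1) (conj p1 D1)).
have sr : path_length b x s <= r.
  apply/ler_addgt0Pr => d d0.
  have d1 : 0 < Num.min d 1 by rewrite lt_min d0 ltr01.
  have [t [pt Dt lt]] := near_paths _ d1.
  have tin : t \in ps by apply: psP pt (le_trans lt _); rewrite lerD2l ge_min lexx orbT.
  apply: le_trans (smin t tin (conj pt Dt)) (le_trans lt _).
  by rewrite lerD2l ge_min lexx.
exists s; split => //; apply/negPn/negP => nu.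
have [s' [ps' ls' lens']] := path_shortcut b_ge0 p nu.
have s'in : s' \in ps.
  by apply: psP ps' (le_trans (ltW lens') (le_trans sr _)); rewrite lerDl.
have Ds' : D (last x s') by rewrite ls'.
by have := smin s' s'in (conj ps' Ds'); rewrite leNgt lens'.
Qed.

End ShortestPaths.

Definition ground_state_transform (R : realType) (X : choiceType) (phi f : X -> R) (x : X) : R :=
  f x / phi x.

Lemma sqr_le_ground_state_transform (R : realType) (X : choiceType) (phi f : X -> R) c x :
  0 < phi x -> phi x <= c -> f x ^+ 2 <= c ^+ 2 * ground_state_transform phi f x ^+ 2.
Proof.
move=> phi0 phic; rewrite /ground_state_transform.
have {1}-> : f x = f x / phi x * phi x by rewrite divfK ?gt_eqF.
rewrite exprMn mulrC ler_wpM2r ?sqr_ge0 //.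
by rewrite lerXn2r ?nnegrE ?(ltW phi0) ?(le_trans (ltW phi0) phic).
Qed.

Section GroundStateTransform.
Variables (R : realType) (X : choiceType) (b : X -> X -> R) (m V phi f : X -> R).
Variables (c lam C : R).
Hypothesis b_ge0 : forall x y, 0 <= b x y.
Hypothesis bC : forall x y, b x y = b y x.
Hypothesis b_psummable : forall x, psummable (b x).
Hypothesis m_gt0 : forall x, 0 < m x.
Hypothesis C_ge0 : 0 <= C.
Hypothesis deg_le : forall x, psum (b x) <= C * m x.
Hypothesis c_ge1 : 1 <= c.
Hypothesis phi_bounds : forall x, c^-1 <= phi x /\ phi x <= c.
Hypothesis superharmonic : forall x, 0 <= LV b m V phi x - lam * phi x.
Hypothesis f_l2 : psummable (fun x => f x ^+ 2 * m x).
Hypothesis Vf_psummable : psummable (fun x => `|V x| * f x ^+ 2).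

Let g := ground_state_transform phi f.

Let c_gt0 : 0 < c. Proof. exact: lt_le_trans ltr01 c_ge1. Qed.

Let phi_gt0 x : 0 < phi x.
Proof. by apply: lt_le_trans (phi_bounds x).1; rewrite invr_gt0. Qed.

Let invphi_le x : (phi x)^-1 <= c.
Proof. by rewrite -(invrK c) lef_pV2 ?posrE ?invr_gt0 //; case: (phi_bounds x). Qed.

Let g_sqr_le x : g x ^+ 2 <= c ^+ 2 * f x ^+ 2.
Proof.
rewrite /g /ground_state_transform exprMn mulrC ler_wpM2r ?sqr_ge0 //.
by rewrite lerXn2r ?nnegrE ?invr_ge0 ?(ltW (phi_gt0 x)) ?(ltW c_gt0) //; apply: invphi_le.
Qed.

Let half_edge (p : X * X) := f p.1 ^+ 2 * b p.1 p.2.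
Let sq_edge (p : X * X) := b p.1 p.2 * (f p.1 ^+ 2 + f p.2 ^+ 2).

Let psummable_half_edge : psummable half_edge.
Proof.
have h0 : nonneg half_edge by move=> p; rewrite mulr_ge0 ?sqr_ge0.
have [sCf _] := psumZ f_l2 C_ge0.
apply: (proj1 (psum_le_bound (B := psum (fun x => C * (f x ^+ 2 * m x))) h0 _)) => s us.
apply: le_trans (ler_sum_pairs h0 us (undup_uniq (map fst s)) (undup_uniq (map snd s)) _) _.
  by move=> p ps; rewrite !mem_undup !map_f.
apply: le_trans (ler_sum_psum sCf (undup_uniq (map fst s))); apply: ler_sum => x _.
rewrite /half_edge /= -mulr_sumr mulrCA ler_wpM2l ?sqr_ge0 //.
by apply: le_trans (deg_le x); apply/ler_sum_psum/undup_uniq.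
Qed.

Let psummable_sq_edge : psummable sq_edge.
Proof.
have [sw _] := psum_involutive psummable_half_edge (@swap_pairK X X).
have [+ _] := psumD psummable_half_edge sw.
suff -> : half_edge \+ (half_edge \o swap_pair) = sq_edge by [].
by apply/funext => p; rewrite /sq_edge /half_edge /= bC; ring.
Qed.

Let psummable_edge_energy (h : X -> R) (k : R) : 0 <= k ->
  (forall x, h x ^+ 2 <= k * f x ^+ 2) -> psummable (edge_energy b h).
Proof.
move=> k0 hk; have [s2 _] := psumZ psummable_sq_edge (mulr_ge0 (ler0n _ 2) k0).
apply: (proj1 (psum_le (edge_energy_ge0 b_ge0 h) s2 _)) => p; rewrite /edge_energy /sq_edge.
rewrite [leRHS]mulrCA ler_wpM2l //.
have := sqr_ge0 (h p.1 + h p.2); have := hk p.1; have := hk p.2; lra.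
Qed.

Lemma psummable_edge_energy_f : psummable (edge_energy b f).
Proof. by apply: (psummable_edge_energy (k := 1)) => // x; rewrite mul1r. Qed.

Lemma psummable_edge_energy_g : psummable (edge_energy b g).
Proof. exact: (psummable_edge_energy (sqr_ge0 c) g_sqr_le). Qed.

Let phi_energy := edge_energy (fun x y => b x y * (phi x * phi y)) g.

Let phi_energy_ge : psummable phi_energy /\ c ^-2 * psum (edge_energy b g) <= psum phi_energy.
Proof.
have phiM_le x y : phi x * phi y <= c ^+ 2.
  by rewrite expr2; apply: ler_pM; rewrite ?(ltW (phi_gt0 _)) ?(phi_bounds _).2.
have phiM_ge x y : c ^-2 <= phi x * phi y.
  by rewrite -exprVn expr2; apply: ler_pM; rewrite ?invr_ge0 ?(ltW c_gt0) ?(phi_bounds _).1.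
have phi_energyE p : phi_energy p = (phi p.1 * phi p.2) * edge_energy b g p.
  by rewrite /phi_energy /edge_energy; ring.
have [sQ _] : psummable phi_energy /\
    psum phi_energy <= psum (fun p => c ^+ 2 * edge_energy b g p).
  apply: psum_le.
  - by move=> p; rewrite phi_energyE mulr_ge0 ?(edge_energy_ge0 b_ge0) ?mulr_ge0 ?ltW.
  - by case: (psumZ psummable_edge_energy_g (sqr_ge0 c)).
  - by move=> p; rewrite phi_energyE ler_wpM2r ?(edge_energy_ge0 b_ge0).
have cV2 : 0 <= c ^-2 by rewrite invr_ge0 sqr_ge0.
split => //; have [_ <-] := psumZ psummable_edge_energy_g cV2.
apply: (proj2 (psum_le _ sQ _)) => p; first by rewrite mulr_ge0 ?(edge_energy_ge0 b_ge0).
by rewrite phi_energyE ler_wpM2r ?(edge_energy_ge0 b_ge0).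
Qed.

Let tau x y := b x y * (phi x - phi y) * f x ^+ 2 / phi x.

Let edge_energy_split x y : edge_energy b f (x, y) = phi_energy (x, y) + tau x y + tau y x.
Proof.
rewrite /phi_energy /tau /edge_energy /g /ground_state_transform /= (bC y x).
by field; rewrite !gt_eqF.
Qed.

Let sum_tau_ge x F : uniq F ->
  lam * (f x ^+ 2 * m x) - V x * f x ^+ 2 -
    c ^+ 2 * (f x ^+ 2 * (psum (b x) - \sum_(y <- F) b x y)) <= \sum_(y <- F) tau x y.
Proof.
move=> uF; pose a y := b x y * (phi x - phi y).
set Dx := psum (b x) - _.
have Dx0 : 0 <= Dx by rewrite subr_ge0 ler_sum_psum.
have a_le y : `|a y| <= c * b x y.
  rewrite normrM ger0_norm // mulrC ler_wpM2r // ler_norml.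
  by case: (phi_bounds x) (phi_bounds y) => ? ? [? ?]; have := phi_gt0 x; have := phi_gt0 y; lra.
have [scb scbE] := psumZ (b_psummable x) (ltW c_gt0).
have := sumR_approx scb a_le uF; rewrite scbE -mulr_sumr -mulrBr -/Dx => approx.
have harmonic : lam * phi x * m x - V x * phi x <= sumR a.
  have := superharmonic x; rewrite /LV -/a subr_ge0 -(ler_pM2r (m_gt0 x)).
  by rewrite [in X in _ <= X -> _]mulrC mulVKf ?gt_eqF //; lra.
have lowA : lam * phi x * m x - V x * phi x - c * Dx <= \sum_(y <- F) a y.
  by move: approx; rewrite ler_norml => /andP [? ?]; lra.
have -> : \sum_(y <- F) tau x y = f x ^+ 2 / phi x * \sum_(y <- F) a y.
  by rewrite mulr_sumr; apply: eq_bigr => y _; rewrite /tau /a; ring.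
have k0 : 0 <= f x ^+ 2 / phi x by rewrite divr_ge0 ?sqr_ge0 ?ltW.
apply: le_trans (ler_wpM2l k0 lowA).
have -> : f x ^+ 2 / phi x * (lam * phi x * m x - V x * phi x - c * Dx) =
  lam * (f x ^+ 2 * m x) - V x * f x ^+ 2 - c * (f x ^+ 2 * Dx) * (phi x)^-1.
  by field; rewrite gt_eqF.
have t0 : 0 <= c * (f x ^+ 2 * Dx) by rewrite mulr_ge0 ?(ltW c_gt0) // mulr_ge0 ?sqr_ge0.
have -> : c ^+ 2 * (f x ^+ 2 * Dx) = c * (f x ^+ 2 * Dx) * c by ring.
by rewrite lerD2l lerN2 ler_wpM2l.
Qed.

Let ground_state_finite F : uniq F ->
  \sum_(x <- F) \sum_(y <- F) phi_energy (x, y) +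
    2 * (lam * \sum_(x <- F) f x ^+ 2 * m x - \sum_(x <- F) V x * f x ^+ 2) -
    2 * (c ^+ 2 * \sum_(x <- F) f x ^+ 2 * (psum (b x) - \sum_(y <- F) b x y))
  <= \sum_(x <- F) \sum_(y <- F) edge_energy b f (x, y).
Proof.
move=> uF.
have -> : \sum_(x <- F) \sum_(y <- F) edge_energy b f (x, y) =
    \sum_(x <- F) \sum_(y <- F) phi_energy (x, y) + 2 * \sum_(x <- F) \sum_(y <- F) tau x y.
  under eq_bigr do under eq_bigr do rewrite edge_energy_split.
  under eq_bigr do rewrite !big_split /=.
  by rewrite !big_split /= [X in _ + _ + X]exchange_big /=; ring.
have : \sum_(x <- F) (lam * (f x ^+ 2 * m x) - V x * f x ^+ 2 -
       c ^+ 2 * (f x ^+ 2 * (psum (b x) - \sum_(y <- F) b x y))) <=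
       \sum_(x <- F) \sum_(y <- F) tau x y.
  by apply: ler_sum => x _; apply: sum_tau_ge.
by rewrite !sumrB -!mulr_sumr; lra.
Qed.

Let approximating_set ep : 0 < ep -> exists F, [/\ uniq F,
  psum phi_energy - ep < \sum_(x <- F) \sum_(y <- F) phi_energy (x, y),
  psum half_edge - ep < \sum_(x <- F) \sum_(y <- F) half_edge (x, y),
  psum (fun x => f x ^+ 2 * m x) - ep < \sum_(x <- F) f x ^+ 2 * m x &
  psum (fun x => `|V x| * f x ^+ 2) - ep < \sum_(x <- F) `|V x| * f x ^+ 2].
Proof.
move=> ep0.
have [sQ [_ hQ]] := psum_pairs_approx phi_energy_ge.1 ep0.
have [sT [_ hT]] := psum_pairs_approx psummable_half_edge ep0.
have [sN [_ hN]] := psum_approx_subseq f_l2 ep0.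
have [sV [_ hV]] := psum_approx_subseq Vf_psummable ep0.
pose F := undup (sQ ++ sT ++ sN ++ sV); have uF : uniq F := undup_uniq _.
have [sQF sTF sNF sVF] : [/\ {subset sQ <= F}, {subset sT <= F}, {subset sN <= F} &
    {subset sV <= F}] by split=> x xs; rewrite mem_undup !mem_cat xs ?orbT.
by exists F; split; [|apply: hQ|apply: hT|apply: hN|apply: hV].
Qed.

Let degree_tail_le F : uniq F ->
  \sum_(x <- F) f x ^+ 2 * (psum (b x) - \sum_(y <- F) b x y) <=
  psum half_edge - \sum_(x <- F) \sum_(y <- F) half_edge (x, y).
Proof.
move=> uF; have -> : \sum_(x <- F) f x ^+ 2 * (psum (b x) - \sum_(y <- F) b x y) =
    \sum_(x <- F) psum (fun y => half_edge (x, y)) - \sum_(x <- F) \sum_(y <- F) half_edge (x, y).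
  rewrite -sumrB; apply: eq_bigr => x _.
  by rewrite (psumZ (b_psummable x) (sqr_ge0 (f x))).2 mulrBr mulr_sumr.
by rewrite lerD2r ler_sum_psum_rows.
Qed.

(* Every sum is replaced by a sum over one finite set [F], up to an error [ep]. *)
Let energyV_ge_phi_energy :
  lam * psum (fun x => f x ^+ 2 * m x) + psum phi_energy / 2 <= energyV b V f.
Proof.
rewrite /energyV (_ : energy b f = psum (edge_energy b f) / 2); last by rewrite /energy mulrC.
apply/ler_addgt0Pr => e e0.
pose K := 2 + `|lam| + c ^+ 2.
have K0 : 0 < K by rewrite /K ltr_wpDr ?sqr_ge0 // ltr_wpDr.
pose ep := e / K; have ep0 : 0 < ep by rewrite divr_gt0.
have epK : `|lam| * ep + c ^+ 2 * ep + 2 * ep = e by rewrite /ep /K; field; rewrite gt_eqF.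
have [F [uF hQ hT hN hV]] := approximating_set ep0.
have P_le := ler_sum_pairs_psum psummable_edge_energy_f uF uF.
have N_le := ler_sum_psum f_l2 uF.
have V_err : `|sumR (fun x => V x * f x ^+ 2) - \sum_(x <- F) V x * f x ^+ 2|
    <= psum (fun x => `|V x| * f x ^+ 2) - \sum_(x <- F) `|V x| * f x ^+ 2.
  by apply: sumR_approx => // x; rewrite normrM [`|_ ^+ 2|]ger0_norm ?sqr_ge0.
have T_err : c ^+ 2 * \sum_(x <- F) f x ^+ 2 * (psum (b x) - \sum_(y <- F) b x y) <=
    c ^+ 2 * ep.
  by rewrite ler_wpM2l ?sqr_ge0 //; apply: le_trans (degree_tail_le uF) _; lra.
have lam_err : lam * psum (fun x => f x ^+ 2 * m x) - `|lam| * ep <=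
    lam * \sum_(x <- F) f x ^+ 2 * m x.
  rewrite lerBlDr -lerBlDl -mulrBr; apply: le_trans (ler_norm _) _.
  by rewrite normrM ler_wpM2l // ger0_norm; lra.
have := ground_state_finite uF; move: V_err; rewrite ler_norml => /andP [? ?]; lra.
Qed.

Lemma energyV_ground_state_ge :
  lam * psum (fun x => f x ^+ 2 * m x) + (2 * c ^+ 2)^-1 * psum (edge_energy b g)
    <= energyV b V f.
Proof.
apply: le_trans energyV_ge_phi_energy; rewrite lerD2l.
have -> : (2 * c ^+ 2)^-1 * psum (edge_energy b g) = c ^-2 * psum (edge_energy b g) / 2.
  by field; rewrite gt_eqF ?exprn_gt0.
by rewrite ler_pM2r // phi_energy_ge.2.
Qed.

End GroundStateTransform.

Section Poincare.
Variables (R : realType) (X : choiceType) (b : X -> X -> R) (m g : X -> R).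
Variables (D : set X) (r W : R) (route : X -> seq X).
Hypothesis b_ge0 : forall x y, 0 <= b x y.
Hypothesis bC : forall x y, b x y = b y x.
Hypothesis m_gt0 : forall x, 0 < m x.
Hypothesis routeP : forall x, [/\ is_path b x (route x), D (last x (route x)),
  uniq (x :: route x) & path_length b x (route x) <= r].
Hypothesis r_ge0 : 0 <= r.
Hypothesis W_ge0 : 0 <= W.
Hypothesis vol_le : forall u F, uniq F -> \sum_(x <- F | dist b u x <= r) m x <= W.
Hypothesis g_D : forall x, D x -> g x = 0.
Hypothesis energy_psummable : psummable (edge_energy b g).

Let route_edges x := path_edges x (route x).

Let edge_energy_swap e : edge_energy b g (swap_pair e) = edge_energy b g e.
Proof. by rewrite /edge_energy /= bC -sqrrN opprB. Qed.

Let sqr_le_route_energy x : g x ^+ 2 <= r * \sum_(e <- route_edges x) edge_energy b g e.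
Proof.
have [px Dl _ lx] := routeP x.
have := path_cauchy_schwarz b_ge0 g px; rewrite (g_D Dl) subr0 => /le_trans; apply.
by rewrite ler_wpM2r // sumr_ge0 // => e _; apply: edge_energy_ge0.
Qed.

Let route_edge_near x e : (e \in route_edges x) || (swap_pair e \in route_edges x) ->
  dist b e.1 x <= r.
Proof.
move=> e_in; have [px _ _ lx] := routeP x.
have e1_in : e.1 \in x :: route x.
  by case/orP: e_in => /path_edges_mem [h1 h2] //; rewrite inE h2 orbT.
have [p pp lp] := path_prefix b_ge0 px e1_in.
by rewrite dist_sym //; apply: le_trans (dist_le_path_length b_ge0 pp) (le_trans lp lx).
Qed.

(* A simple path uses an edge in at most one direction, and only if the edge starts
   within distance [r] of the path's origin. *)
Let route_edge_indicator x e :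
  ((e \in route_edges x)%:R + (swap_pair e \in route_edges x)%:R : R) <=
  (nat_of_bool (dist b e.1 x <= r)%R)%:R.
Proof.
have [_ _ ux _] := routeP x.
case: (boolP (e \in route_edges x)) => h1.
  by rewrite (negPf (path_edges_swap_notin ux h1)) route_edge_near ?h1 ?addr0.
case: (boolP (swap_pair e \in route_edges x)) => h2; last by rewrite addr0 ler0n.
by rewrite route_edge_near ?h2 ?orbT ?add0r.
Qed.

Let route_mass F e := \sum_(x <- F) m x * (e \in route_edges x)%:R.
Let used_edges F := undup (flatten [seq route_edges x ++ map swap_pair (route_edges x) | x <- F]).

Let sum_sqr_le_route_mass_energy F : uniq F ->
  \sum_(x <- F) g x ^+ 2 * m x <= r * \sum_(e <- used_edges F) edge_energy b g e * route_mass F e.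
Proof.
move=> uF.
have -> : \sum_(e <- used_edges F) edge_energy b g e * route_mass F e =
    \sum_(x <- F) m x * \sum_(e <- route_edges x) edge_energy b g e.
  have sum_route x : x \in F -> m x * \sum_(e <- route_edges x) edge_energy b g e =
      \sum_(e <- used_edges F) m x * ((e \in route_edges x)%:R * edge_energy b g e).
    move=> xF; rewrite -mulr_sumr; congr (_ * _); apply: sum_indicator.
    - by have [_ _ ux _] := routeP x; apply: uniq_path_edges.
    - exact: undup_uniq.
    - by move=> e ein; rewrite mem_undup; apply/flatten_mapP; exists x; rewrite ?mem_cat ?ein.
  rewrite [RHS]big_seq (eq_bigr _ sum_route) -big_seq exchange_big /=.
  by apply: eq_bigr => e _; rewrite /route_mass mulr_sumr; apply: eq_bigr => x _; ring.
rewrite mulr_sumr; apply: ler_sum => x _.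
by rewrite mulrC [r * _]mulrCA ler_wpM2l ?(ltW (m_gt0 x)) // sqr_le_route_energy.
Qed.

Let route_mass_swap_le F e : uniq F -> route_mass F e + route_mass F (swap_pair e) <= W.
Proof.
move=> uF; rewrite /route_mass -big_split /=.
apply: le_trans (vol_le e.1 uF); rewrite [leRHS]big_mkcond /=; apply: ler_sum => x _.
rewrite -mulrDr; have := route_edge_indicator x e.
by case: (dist b e.1 x <= r) => h; [apply: ler_piMr|apply: mulr_ge0_le0]; rewrite ?(ltW (m_gt0 x)).
Qed.

Let sum_edges_swap F : \sum_(e <- used_edges F) edge_energy b g e * route_mass F e =
  \sum_(e <- used_edges F) edge_energy b g e * route_mass F (swap_pair e).
Proof.
have swap_edges e : e \in used_edges F -> swap_pair e \in used_edges F.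
  rewrite !mem_undup => /flatten_mapP [x xF]; rewrite mem_cat => /orP [h|/mapP [e' e'in ->]].
    by apply/flatten_mapP; exists x; rewrite // mem_cat map_f ?orbT.
  by apply/flatten_mapP; exists x; rewrite // mem_cat swap_pairK e'in.
have swap_perm : perm_eq (map swap_pair (used_edges F)) (used_edges F).
  have uE : uniq (used_edges F) := undup_uniq _.
  apply: uniq_perm => //; first by rewrite map_inj_uniq //; apply: (can_inj swap_pairK).
  move=> e; apply/mapP/idP => [[e' e'in ->]|ein]; first exact: swap_edges.
  by exists (swap_pair e); rewrite ?swap_pairK ?swap_edges.
rewrite -[RHS](perm_big _ swap_perm) big_map; apply: eq_bigr => e _.
by rewrite edge_energy_swap swap_pairK.
Qed.

Lemma poincare_finite F : uniq F ->
  \sum_(x <- F) g x ^+ 2 * m x <= r * W / 2 * psum (edge_energy b g).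
Proof.
move=> uF; pose S := \sum_(e <- used_edges F) edge_energy b g e * route_mass F e.
have twice : 2 * S <= W * psum (edge_energy b g).
  rewrite mulr2n mulrDl mul1r {2}/S sum_edges_swap -big_split /=.
  apply: le_trans (_ : \sum_(e <- used_edges F) edge_energy b g e * W <= _).
    apply: ler_sum => e _; rewrite -mulrDr ler_wpM2l ?(edge_energy_ge0 b_ge0) //.
    exact: route_mass_swap_le.
  by rewrite -mulr_suml mulrC ler_wpM2l // ler_sum_psum ?undup_uniq.
apply: le_trans (sum_sqr_le_route_mass_energy uF) _.
by have := ler_wpM2l r_ge0 twice; rewrite /S; lra.
Qed.

Lemma poincare : psummable (fun x => g x ^+ 2 * m x) /\
  psum (fun x => g x ^+ 2 * m x) <= r * W / 2 * psum (edge_energy b g).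
Proof.
apply: psum_le_bound; last exact: poincare_finite.
by move=> x; rewrite mulr_ge0 ?sqr_ge0 ?ltW.
Qed.

End Poincare.

Section WeightedGraph.
Variables (R : realType) (X : choiceType) (b : X -> X -> R) (m : X -> R).
Hypothesis b_ge0 : forall x y, 0 <= b x y.
Hypothesis bC : forall x y, b x y = b y x.
Hypothesis deg_fin : forall x, (esumX (b x) < +oo)%E.
Hypothesis m_gt0 : forall x, 0 < m x.

Lemma psummable_weights x : psummable (b x).
Proof. by split; [apply: b_ge0|apply: deg_fin]. Qed.

Lemma edge_le_degree x y : b x y <= psum (b x).
Proof. by have := ler_sum_psum (psummable_weights x) (isT : uniq [:: y]); rewrite big_seq1. Qed.

Lemma condB_degree_le : condB b m -> exists2 C, 0 <= C & forall x, psum (b x) <= C * m x.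
Proof.
case=> C hC; exists (Num.max C 0) => [|x]; first by rewrite le_max lexx orbT.
apply: le_trans (_ : C * m x <= _); last by rewrite ler_wpM2r ?(ltW (m_gt0 x)) ?le_max ?lexx.
by have := hC x; rewrite mulrC ler_pdivrMr.
Qed.

Lemma condBM_edge_le : condB b m -> condM m -> exists2 B, 0 < B & forall x y, b x y <= B.
Proof.
move=> /condB_degree_le [C C0 degC] [M mM]; exists (Num.max (C * M) 1) => [|x y].
  by rewrite lt_max ltr01 orbT.
apply: le_trans (edge_le_degree x y) (le_trans (degC x) _).
by rewrite le_max ler_wpM2l.
Qed.

Lemma covering_radius_ge0 (D : set X) : relatively_dense b D -> 0 <= covering_radius b D.
Proof. by move=> dense; apply: lb_le_inf => // r [r0 _]; apply: ltW. Qed.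

Lemma near_paths_to (D : set X) x d : connected_graph b -> relatively_dense b D -> 0 < d ->
  exists s, [/\ is_path b x s, D (last x s) & path_length b x s <= covering_radius b D + d].
Proof.
move=> conn dense d0; set rD := covering_radius b D.
have d2 : 0 < d / 2 by rewrite divr_gt0.
have rd2 : rD < rD + d / 2 by rewrite ltrDl.
have [r [_ cover] rlt] := inf_lt dense rd2.
have [p [Dp pr]] := cover x.
have dxp : dist b x p < rD + d / 2 by rewrite dist_sym //; apply: le_lt_trans pr rlt.
have ne : [set path_length b x s | s in path_from_to b x p] !=set0.
  by have [s hs] := conn x p; exists (path_length b x s), s.
have [_ [s [ps ls] <-] lt] := inf_lt ne dxp.
exists s; split; rewrite ?ls //; apply: le_trans (ltW lt) _.
by rewrite lerD2l ler_pdivrMr // ler_pMr // ler1n.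
Qed.

Lemma mass_lower_bound (D : set X) (C : R) x : connected_graph b -> relatively_dense b D ->
  (forall x, psum (b x) <= C * m x) -> ~ D x -> 1 <= C * m x * (covering_radius b D + 1).
Proof.
move=> conn dense degC nDx.
have [[|y s] [ps Ds ls]] := near_paths_to x conn dense ltr01; first by [].
case: ps ls => bxy _ /= ls.
have rD1 : 0 <= covering_radius b D + 1 by rewrite addr_ge0 ?covering_radius_ge0.
have : 1 <= b x y * (covering_radius b D + 1).
  rewrite -[leLHS](divff (lt0r_neq0 bxy)) ler_wpM2l ?(ltW bxy) //.
  by apply: (le_trans _ ls); rewrite lerDl path_length_ge0.
move/le_trans; apply; rewrite ler_wpM2r //.
exact: le_trans (edge_le_degree x y) (degC x).
Qed.

(* [f] vanishes on [D] and points off [D] have mass at least [1 / (C (r + 1))], so the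
   [l^2(m)] bound on [f] controls the unweighted sum of [V f^2]. *)
Lemma psummable_Vf (D : set X) (V f : X -> R) (C K : R) :
  connected_graph b -> relatively_dense b D -> 0 <= C ->
  (forall x, psum (b x) <= C * m x) -> (forall x, `|V x| <= K) ->
  (forall x, D x -> f x = 0) -> psummable (fun x => f x ^+ 2 * m x) ->
  psummable (fun x => `|V x| * f x ^+ 2).
Proof.
move=> conn dense C0 degC VK fD f_l2.
set K' := Num.max K 0; have [KK' K0] : K <= K' /\ 0 <= K' by rewrite !le_max !lexx orbT.
have rD1 : 0 <= covering_radius b D + 1 by rewrite addr_ge0 ?covering_radius_ge0.
have k0 : 0 <= K' * C * (covering_radius b D + 1) by rewrite !mulr_ge0.
apply: (proj1 (psum_le _ (psumZ f_l2 k0).1 _)) => [x|x]; first by rewrite mulr_ge0 ?sqr_ge0.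
have [->|fxn] := eqVneq (f x) 0; first by rewrite expr0n /= mulr0 mul0r mulr0.
have nDx : ~ D x by move/fD/eqP; apply/negP.
apply: le_trans (ler_wpM2r (sqr_ge0 _) (le_trans (VK x) KK')) _.
have -> : K' * C * (covering_radius b D + 1) * (f x ^+ 2 * m x) =
  K' * f x ^+ 2 * (C * m x * (covering_radius b D + 1)) by ring.
rewrite -[leLHS]mulr1 ler_wpM2l ?(mulr_ge0 K0 (sqr_ge0 _)) //; exact: mass_lower_bound.
Qed.

Lemma volsup_fine_ge0 s : 0 <= fine (volsup b m s).
Proof.
rewrite /volsup; set S := [set _ | _ in _].
have [->|/set0P [v Sv]] := eqVneq S set0; first by rewrite ereal_sup0.
apply/fine_ge0/(le_trans _ (ereal_sup_ubound Sv)).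
by case: Sv => u _ <-; apply: esum_ge0 => x _; rewrite lee_fin ltW.
Qed.

(* [fine] sends [+oo] to [0], so the hypothesis forces [volsup b m s] to be finite. *)
Lemma sum_ball_le_volsup r s u F : fine (volsup b m s) != 0 -> r <= s -> uniq F ->
  \sum_(x <- F | dist b u x <= r) m x <= fine (volsup b m s).
Proof.
move=> vs0 rs uF; have [w vE] : exists w, volsup b m s = w%:E.
  by move: vs0; case: volsup => [w _|/=|/=]; rewrite ?eqxx //; exists w.
rewrite vE /= -lee_fin -vE; apply/le_trans/ereal_sup_ubound; last by exists u.
apply: esum_ge; exists [set` [seq x <- F | dist b u x <= r]].
  by split => // x /=; rewrite mem_filter => /andP [xr _]; apply: le_trans xr rs.
by rewrite fsumEFin // -fsbig_seq ?filter_uniq // big_filter.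
Qed.

End WeightedGraph.

(* The case [W = 0] covers an infinite volume, where the claimed gap is [0]. *)
Lemma gap_from_poincare (R : realFieldType) (lam N P E c r W : R) :
  0 < c -> 0 <= P -> 0 <= r -> 0 <= W ->
  lam * N + (2 * c ^+ 2)^-1 * P <= E -> (W != 0 -> N <= c ^+ 2 * (r * W / 2 * P)) ->
  (lam + (c ^+ 4 * r * W)^-1) * N <= E.
Proof.
move=> c0 P0 r0 W0 gs poinc; rewrite mulrDl.
have cP0 : 0 <= (2 * c ^+ 2)^-1 * P by rewrite mulr_ge0 // invr_ge0 mulr_ge0 ?sqr_ge0.
have [Z0|Zn0] := eqVneq (c ^+ 4 * r * W) 0; first by rewrite Z0 invr0 mul0r addr0; lra.
have Zgt0 : 0 < c ^+ 4 * r * W by rewrite lt_def Zn0 mulr_ge0 // mulr_ge0 // exprn_ge0 // ltW.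
have Wn0 : W != 0 by apply: contraNneq Zn0 => ->; rewrite mulr0.
suff : (c ^+ 4 * r * W)^-1 * N <= (2 * c ^+ 2)^-1 * P by lra.
rewrite ler_pdivrMl //; apply: le_trans (poinc Wn0) _.
by rewrite le_eqVlt; apply/orP; left; apply/eqP; field; rewrite gt_eqF.
Qed.

Section SpectralGap.
Variables (R : realType) (X : choiceType) (b : X -> X -> R) (m V phi f : X -> R).
Variables (D : set X) (c B C K : R).
Hypothesis b_ge0 : forall x y, 0 <= b x y.
Hypothesis bC : forall x y, b x y = b y x.
Hypothesis deg_fin : forall x, (esumX (b x) < +oo)%E.
Hypothesis m_gt0 : forall x, 0 < m x.
Hypothesis conn : connected_graph b.
Hypothesis dense : relatively_dense b D.
Hypothesis C_ge0 : 0 <= C.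
Hypothesis degC : forall x, psum (b x) <= C * m x.
Hypothesis B_gt0 : 0 < B.
Hypothesis b_le : forall x y, b x y <= B.
Hypothesis VK : forall x, `|V x| <= K.
Hypothesis superharmonic : forall x, 0 <= LV b m V phi x - bottom_spectrum b m V * phi x.
Hypothesis c_ge1 : 1 <= c.
Hypothesis phi_bounds : forall x, c^-1 <= phi x /\ phi x <= c.
Hypothesis f_l2 : l2 m f.
Hypothesis f_D : forall x, D x -> f x = 0.

Let b_psummable := psummable_weights b_ge0 deg_fin.

Let f_psummable : psummable (fun x => f x ^+ 2 * m x).
Proof. by split => // x; rewrite mulr_ge0 ?sqr_ge0 ?ltW. Qed.

Lemma energyV_ge_transform_energy :
  bottom_spectrum b m V * norm2 m f +
    (2 * c ^+ 2)^-1 * psum (edge_energy b (ground_state_transform phi f)) <= energyV b V f.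
Proof.
apply: (energyV_ground_state_ge b_ge0 bC b_psummable m_gt0 C_ge0 degC c_ge1 phi_bounds
  superharmonic f_psummable).
exact: (psummable_Vf b_ge0 bC deg_fin conn dense C_ge0 degC VK f_D f_psummable).
Qed.

Lemma norm2_le_transform_energy :
  let r := covering_radius b D in let W := fine (volsup b m (c ^+ 2 * r)) in
  W != 0 -> norm2 m f <= c ^+ 2 * (r * W / 2 * psum (edge_energy b (ground_state_transform phi f))).
Proof.
move=> r W Wn0; have r0 : 0 <= r := covering_radius_ge0 dense.
have [route routeP] := choice (fun x => simple_path_to b_ge0 b_psummable B_gt0 b_le r0
  (fun d d0 => near_paths_to bC x conn dense d0)).
have vol_le u F : uniq F -> \sum_(x <- F | dist b u x <= r) m x <= W.
  move=> uF; apply: sum_ball_le_volsup => //; apply: ler_peMl => //.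
  by rewrite expr_ge1 // (le_trans ler01).
have g_D x : D x -> ground_state_transform phi f x = 0.
  by move=> Dx; rewrite /ground_state_transform f_D ?mul0r.
have [g_l2 poinc] := poincare b_ge0 bC m_gt0 routeP r0 (volsup_fine_ge0 b m_gt0 _) vol_le g_D
  (psummable_edge_energy_g b_ge0 bC b_psummable C_ge0 degC c_ge1 phi_bounds f_psummable).
have [cg_l2 cg_E] := psumZ g_l2 (sqr_ge0 c).
have := ler_wpM2l (sqr_ge0 c) poinc; rewrite -cg_E => /(le_trans _); apply.
rewrite -[norm2 m f]/(psum (fun x => f x ^+ 2 * m x)).
apply: (proj2 (psum_le _ cg_l2 _)) => x; first by rewrite mulr_ge0 ?sqr_ge0 ?ltW.
have [phi_lb phi_ub] := phi_bounds x.
have phi_gt0 : 0 < phi x by apply: lt_le_trans phi_lb; rewrite invr_gt0 (lt_le_trans ltr01).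
by rewrite mulrA ler_wpM2r ?(ltW (m_gt0 x)) // sqr_le_ground_state_transform.
Qed.

End SpectralGap.

Theorem theorem7p1 (R : realType) (X : choiceType) (b : X -> X -> R) (m : X -> R)
  (V : X -> R) (D : set X) (phi : X -> R) (c : R) :
  weighted_graph b m -> connected_graph b -> condB b m -> condM m ->
  (exists K : R, forall x, `|V x| <= K) ->
  relatively_dense b D ->
  regular_ground_state b m V phi c ->
  forall f : X -> R, l2 m f -> (forall x, D x -> f x = 0) ->
  energyV b V f >=
    (bottom_spectrum b m V +
      (c ^+ 4 * covering_radius b D *
        fine (volsup b m (c ^+ 2 * covering_radius b D)))^-1) * norm2 m f.
Proof.
move=> [_ [b_ge0 [bC [_ [deg_fin m_gt0]]]]] conn condB_bm condM_m [K VK] dense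
  [[_ [_ superharmonic]] [c_ge1 phi_bounds]] f f_l2 f_D.
have [C C0 degC] := condB_degree_le m_gt0 condB_bm.
have [B B0 b_le] := condBM_edge_le b_ge0 deg_fin m_gt0 condB_bm condM_m.
apply: (gap_from_poincare _ (psum_ge0 (edge_energy_ge0 b_ge0 _)) (covering_radius_ge0 dense)
  (volsup_fine_ge0 b m_gt0 _)).
- exact: lt_le_trans c_ge1.
- exact: (energyV_ge_transform_energy b_ge0 bC deg_fin m_gt0 conn dense C0 degC VK
    superharmonic c_ge1 phi_bounds f_l2 f_D).
- exact: (norm2_le_transform_energy b_ge0 bC deg_fin m_gt0 conn dense C0 degC B0 b_le
    c_ge1 phi_bounds f_l2 f_D).
Qed.
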